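(* Let $A$ and $Z$ be $n\times n$ complex matrices with $A$ positive semidefinite and $Z$ positive definite with largest eigenvalue $a$ and smallest eigenvalue $b$. Then $$\Vert AZ\Vert_\infty \le \frac{a+b}{2\sqrt{ab}}\,\rho(AZ) \quad\text{and}\quad \Vert AZ\Vert_1 \le \frac{a+b}{2\sqrt{ab}}\,{\rm Tr}\,AZ.$$
   Context: $\Vert\cdot\Vert_\infty$ is the operator norm (largest singular value), $\Vert\cdot\Vert_1$ is the trace norm (sum of singular values), $\rho(\cdot)$ is the spectral radius, and ${\rm Tr}$ is the trace. *)

From HB Require Import structures.
From mathcomp Require Import all_boot all_order all_algebra.
From mathcomp Require Export spectral.
From mathcomp Require Export complex.
Set Implicit Arguments. Unset Strict Implicit. Unset Printing Implicit Defensive.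
Import Order.TTheory GRing.Theory Num.Theory.
Local Open Scope ring_scope.
Local Open Scope sesquilinear_scope.

(* Matrix notions over an algebraically closed numeric field C
   (instantiated in the statement with C = R[i], R real closed). *)
Section Defs.
Context {C : numClosedFieldType}.

(* Conjugate transpose M^* is M ^t* (spectral.v). *)
Definition hermitian_mx n (M : 'M[C]_n) : Prop := M ^t* = M.

Definition psd_mx n (M : 'M[C]_n) : Prop :=
  hermitian_mx M /\ forall v : 'rV[C]_n, 0 <= (v *m M *m v ^t*) 0 0.

Definition pd_mx n (M : 'M[C]_n) : Prop :=
  hermitian_mx M /\ forall v : 'rV[C]_n, v != 0 -> 0 < (v *m M *m v ^t*) 0 0.

(* the eigenvalues of M, listed with algebraic multiplicity
   (the roots of the characteristic polynomial) *)
Definition eigvals n (M : 'M[C]_n) : seq C :=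
  sval (closed_field_poly_normal (char_poly M)).

Definition singvals n (M : 'M[C]_n) : seq C :=
  [seq sqrtC z | z <- eigvals (M ^t* *m M)].

Definition opnorm n (M : 'M[C]_n) : C := \big[Num.max/0]_(s <- singvals M) s.

Definition tracenorm n (M : 'M[C]_n) : C := \sum_(s <- singvals M) s.

Definition specrad n (M : 'M[C]_n) : C := \big[Num.max/0]_(z <- eigvals M) `|z|.

End Defs.

From HB Require Import structures.
From mathcomp Require Import all_boot all_order all_algebra spectral complex.
From mathcomp Require Import ring.
Import Order.TTheory GRing.Theory Num.Theory.
Set Implicit Arguments. Unset Strict Implicit. Unset Printing Implicit Defensive.
Local Open Scope ring_scope.
Local Open Scope sesquilinear_scope.

(* Let K = (a + b) / (2 sqrt (a b)) and write Z = S^2 with S = Z^(1/2), T = S^(-1).  Since the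
   spectrum of Z lies in [b, a], Kantorovich's inequality gives |w S|^2 |w T|^2 <= K^2 |w|^4 for
   every vector w.  The matrix P = S A S is positive semidefinite, with eigenvalues lam_j and
   orthonormal eigenvectors w_j, and A Z = T P S is similar to P; hence rho(A Z) = max lam_j and
   Tr (A Z) = sum lam_j.
   Trace norm: ||A Z||_1 = Tr (X A Z) for a contraction X (polar decomposition), and
   Tr (X A Z) = Tr (S X T P) = sum_j lam_j <w_j S X, w_j T>, where each coefficient has modulus
   at most |w_j S| |w_j T| <= K.
   Operator norm: let u (A Z) (A Z)^* = x u.  From (Z - a) (Z - b) <= 0 and A Z A <= rho A,
   x |u|^2 = |u A Z|^2 <= (a + b) rho <u A, u> - a b |u A|^2, while <u A, u>^2 <= |u A|^2 |u|^2;
   maximizing over <u A, u> yields x <= K^2 rho^2. *)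

Section ScalarInequalities.
Variable F : numFieldType.

Lemma le_quadratic_max (p q t N Y x : F) : p \is Num.real -> t \is Num.real ->
  0 < q -> 0 < N -> x * N <= p * t - q * Y -> t ^+ 2 <= Y * N ->
  4 * q * x <= p ^+ 2.
Proof.
move=> p_real t_real q_gt0 N_gt0 le_xN le_tYN.
(* [p t - q t^2 / N] is at most [p^2 N / (4 q)] *)
have q_ge0 := ltW q_gt0; have N_ge0 := ltW N_gt0.
rewrite -(ler_pM2r (mulr_gt0 N_gt0 N_gt0)).
apply: (@le_trans _ _ (4 * q * N * (p * t - q * Y))).
  rewrite (_ : _ * (N * N) = 4 * q * N * (x * N)); last by ring.
  by rewrite ler_wpM2l // !mulr_ge0.
apply: (@le_trans _ _ (4 * q * N * (p * t) - 4 * q ^+ 2 * t ^+ 2)).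
  rewrite mulrBr lerD2l lerN2 (_ : _ * (q * Y) = 4 * q ^+ 2 * (Y * N)); last by ring.
  by rewrite ler_wpM2l // mulr_ge0 // exprn_ge0.
rewrite -subr_ge0 (_ : _ - _ = (p * N - 2 * q * t) ^+ 2); last by ring.
by rewrite -realEsqr rpredB ?rpredM ?realn ?(gtr0_real N_gt0) ?(gtr0_real q_gt0).
Qed.

Lemma kantorovich_sum (I : finType) (a b : F) (z w : I -> F) :
  0 < a -> 0 < b -> (forall i, b <= z i <= a) -> (forall i, 0 <= w i) ->
  4 * (a * b) * ((\sum_i z i * w i) * \sum_i w i / z i) <=
  ((a + b) * \sum_i w i) ^+ 2.
Proof.
move=> a_gt0 b_gt0 z_bounds w_ge0.
have z_gt0 i : 0 < z i by case/andP: (z_bounds i) => /(lt_le_trans b_gt0).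
have ab_gt0 : 0 < a * b by rewrite mulr_gt0.
set X := \sum_i z i * w i; set Y := \sum_i w i / z i; set W := \sum_i w i.
have X_ge0 : 0 <= X by apply: sumr_ge0 => i _; rewrite mulr_ge0 // ltW.
have Y_ge0 : 0 <= Y by apply: sumr_ge0 => i _; rewrite divr_ge0 // ltW.
have le_XY_W : X + a * b * Y <= (a + b) * W.
  rewrite /X /Y /W !mulr_sumr -big_split /=; apply: ler_sum => i _.
  have [bz za] := andP (z_bounds i).
  rewrite -subr_ge0 (_ : _ - _ = w i * (a - z i) * (z i - b) / z i).
    by rewrite divr_ge0 ?mulr_ge0 ?subr_ge0 // ltW.
  by field; rewrite gt_eqF.
have XY_real : a * b * Y \is Num.real by rewrite ger0_real // mulr_ge0 // ltW.
have AGM := leif_le (real_leif_AGM2_scaled (ger0_real X_ge0) XY_real).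
rewrite (_ : 4 * _ * _ = X * (a * b * Y) *+ 4); last by rewrite -mulr_natl; ring.
apply: le_trans AGM _.
have lhs_ge0 : 0 <= X + a * b * Y by rewrite addr_ge0 // mulr_ge0 // ltW.
by rewrite ler_pXn2r ?nnegrE // (le_trans lhs_ge0).
Qed.

End ScalarInequalities.

Definition kantorovich (C : numClosedFieldType) (a b : C) :=
  (a + b) / (2 * sqrtC (a * b)).

Lemma kantorovich_ge0 (C : numClosedFieldType) (a b : C) :
  0 <= a -> 0 <= b -> 0 <= kantorovich a b.
Proof.
move=> a_ge0 b_ge0; rewrite /kantorovich divr_ge0 ?addr_ge0 //.
by rewrite mulr_ge0 // sqrtC_ge0 mulr_ge0.
Qed.

Lemma le_kantorovich_sqr (C : numClosedFieldType) (a b r y : C) : 0 < a -> 0 < b ->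
  4 * (a * b) * y <= ((a + b) * r) ^+ 2 -> y <= (kantorovich a b * r) ^+ 2.
Proof.
move=> a_gt0 b_gt0 le_y; have ab_gt0 : 0 < a * b by rewrite mulr_gt0.
rewrite /kantorovich exprMn expr_div_n exprMn sqrtCK -natrX mulrAC -exprMn.
by rewrite ler_pdivlMr ?mulr_gt0 // mulrC.
Qed.

Local Notation "''[' u , v ]" := ((u *m v ^t*) 0 0) : ring_scope.
Local Notation "''[' u ]" := '[u, u] : ring_scope.

Lemma char_poly_conj (R : comUnitRingType) n (P M : 'M[R]_n) : P \in unitmx ->
  char_poly (invmx P *m M *m P) = char_poly M.
Proof.
move=> P_unit; rewrite /char_poly /char_poly_mx.
set Pi := map_mx polyC (invmx P); set Pp := map_mx polyC P.
have Pi_Pp : Pi *m Pp = 1%:M by rewrite -map_mxM mulVmx ?map_mx1.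
rewrite !map_mxM (_ : 'X%:M - _ = Pi *m ('X%:M - map_mx polyC M) *m Pp).
  by rewrite !det_mulmx mulrAC -det_mulmx Pi_Pp det1 mul1r.
by rewrite mulmxBr mulmxBl mul_mx_scalar -scalemxAl Pi_Pp scalemx1.
Qed.

Section ConjugateTranspose.
Variable C : numClosedFieldType.

Lemma trmxC_mul m n p (X : 'M[C]_(m, n)) (Y : 'M[C]_(n, p)) :
  (X *m Y) ^t* = Y ^t* *m X ^t*.
Proof. by rewrite trmx_mul map_mxM. Qed.

Lemma trmxC_unitarymxK n (V : 'M[C]_n) : V \is unitarymx -> V ^t* *m V = 1%:M.
Proof. by move=> V_unitary; rewrite -[V ^t*]mul1mx mulmxKtV. Qed.

Lemma dnormmx_ge0 n (u : 'rV[C]_n) : 0 <= '[u].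
Proof. by rewrite -dotmxE dnorm_ge0. Qed.

Lemma dnormmx_gt0 n (u : 'rV[C]_n) : u != 0 -> 0 < '[u].
Proof. by move=> u_neq0; rewrite -dotmxE dnorm_gt0. Qed.

Lemma CauchySchwarz_mx n (u v : 'rV[C]_n) : `|'[u, v]| ^+ 2 <= '[u] * '[v].
Proof. by rewrite -!dotmxE; apply: (CauchySchwarz (@dotmx C n) u v).1. Qed.

Lemma mulmx_trmxC_entry m n p (X : 'M[C]_(m, n)) (M : 'M[C]_n) (Y : 'M[C]_(p, n)) i j :
  (X *m M *m Y ^t*) i j = '[row i X *m M, row j Y].
Proof.
rewrite !mxE; apply: eq_bigr => k _; rewrite !mxE; congr (_ * _).
by apply: eq_bigr => l _; rewrite !mxE.
Qed.

Lemma dnorm_mulmx_herm n (u : 'rV[C]_n) (M : 'M[C]_n) : hermitian_mx M ->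
  '[u *m M] = '[u *m (M *m M), u].
Proof. by move=> M_herm; rewrite trmxC_mul M_herm !mulmxA. Qed.

Lemma psd_trmxC_mul n (M : 'M[C]_n) : psd_mx (M ^t* *m M).
Proof.
split=> [|v]; first by rewrite /hermitian_mx trmxC_mul trmxCK.
suff -> : v *m (M ^t* *m M) *m v ^t* = (v *m M ^t*) *m (v *m M ^t*) ^t*.
  exact: dnormmx_ge0.
by rewrite trmxC_mul trmxCK !mulmxA.
Qed.

End ConjugateTranspose.

Section Spectrum.
Variable C : numClosedFieldType.

Lemma pd_eigenvalue_gt0 n (M : 'M[C]_n) x : pd_mx M -> eigenvalue M x -> 0 < x.
Proof.
move=> [_ M_pos] /eigenvalueP[v vM v_neq0].
by have := M_pos v v_neq0; rewrite vM -scalemxAl mxE pmulr_lgt0 ?dnormmx_gt0.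
Qed.

Lemma psd_eigenvalue_ge0 n (M : 'M[C]_n) x : psd_mx M -> eigenvalue M x -> 0 <= x.
Proof.
move=> [_ M_nneg] /eigenvalueP[v vM v_neq0].
by have := M_nneg v; rewrite vM -scalemxAl mxE pmulr_lge0 ?dnormmx_gt0.
Qed.

Lemma char_poly_eigvals n (M : 'M[C]_n) :
  char_poly M = \prod_(x <- eigvals M) ('X - x%:P).
Proof.
rewrite /eigvals; case: closed_field_poly_normal => r /= {1}->.
by rewrite (monicP (char_poly_monic M)) scale1r.
Qed.

Lemma mem_eigvals n (M : 'M[C]_n) x : (x \in eigvals M) = eigenvalue M x.
Proof. by rewrite eigenvalue_root_char char_poly_eigvals root_prod_XsubC. Qed.

Lemma bigmax_norm_ge0 (s : seq C) : 0 <= \big[Num.max/0]_(x <- s) `|x|.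
Proof.
elim/big_ind: _ => // x y x_ge0 y_ge0.
by case: (comparableP x y) (real_comparable (ger0_real x_ge0) (ger0_real y_ge0)).
Qed.

Lemma le_bigmax_norm (s : seq C) x : x \in s -> `|x| <= \big[Num.max/0]_(y <- s) `|y|.
Proof.
elim: s => [|y s IHs] //; rewrite in_cons big_cons.
rewrite comparable_le_max ?real_comparable ?ger0_real ?bigmax_norm_ge0 //.
by case/orP=> [/eqP-> | /IHs ->]; rewrite ?lexx ?orbT.
Qed.

Lemma specrad_ge0 n (M : 'M[C]_n) : 0 <= specrad M.
Proof. exact: bigmax_norm_ge0. Qed.

Lemma norm_le_specrad n (M : 'M[C]_n) x : eigenvalue M x -> `|x| <= specrad M.
Proof. by rewrite -mem_eigvals; apply: le_bigmax_norm. Qed.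

End Spectrum.

Section UnitaryDiagonal.
Variables (C : numClosedFieldType) (n : nat) (V : 'M[C]_n).
Hypothesis V_unitary : V \is unitarymx.
Implicit Types (d e u : 'rV[C]_n).

Fact udiag_mx_key : unit. Proof. by []. Qed.
Definition udiag_mx d := locked_with udiag_mx_key (V ^t* *m diag_mx d *m V).

Lemma udiag_mxE d : udiag_mx d = V ^t* *m diag_mx d *m V.
Proof. exact: unlock. Qed.

Lemma udiag_mxM d e :
  udiag_mx d *m udiag_mx e = udiag_mx (\row_k (d 0 k * e 0 k)).
Proof.
rewrite !udiag_mxE -mulmx_diag -!mulmxA (mulmxA V) (unitarymxP V_unitary).
by rewrite mul1mx.
Qed.

Lemma udiag_mx1 : udiag_mx (const_mx 1) = 1%:M.
Proof. by rewrite udiag_mxE diag_const_mx mulmx1 trmxC_unitarymxK. Qed.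

Lemma trmxC_udiag_mx d :
  (forall k, d 0 k \is Num.real) -> (udiag_mx d) ^t* = udiag_mx d.
Proof.
move=> d_real; rewrite !udiag_mxE !trmxC_mul trmxCK mulmxA tr_diag_mx map_diag_mx.
by congr (_ *m diag_mx _ *m _); apply/rowP => k; rewrite mxE; apply: conj_Creal.
Qed.

Lemma dnorm_row_unitary k : '[row k V] = 1.
Proof. by move/row_unitarymxP: V_unitary => /(_ k k); rewrite dotmxE eqxx. Qed.

Lemma row_unitary_neq0 k : row k V != 0.
Proof.
apply: contra_eq_neq (dnorm_row_unitary k) => ->.
by rewrite mul0mx mxE eq_sym oner_neq0.
Qed.

Lemma row_udiag_mx d k : row k V *m udiag_mx d = d 0 k *: row k V.
Proof.
rewrite -row_mul udiag_mxE !mulmxA (unitarymxP V_unitary) mul1mx.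
by rewrite row_mul row_diag_mx -scalemxAl -rowE.
Qed.

Lemma eigenvalue_udiag_mx d k : eigenvalue (udiag_mx d) (d 0 k).
Proof.
by apply/eigenvalueP; exists (row k V); rewrite ?row_udiag_mx ?row_unitary_neq0.
Qed.

Lemma quad_row_udiag_mx d k : '[row k V *m udiag_mx d, row k V] = d 0 k.
Proof. by rewrite row_udiag_mx -scalemxAl mxE dnorm_row_unitary mulr1. Qed.

Lemma quad_udiag_mx d u :
  '[u *m udiag_mx d, u] = \sum_k d 0 k * `|(u *m V ^t*) 0 k| ^+ 2.
Proof.
have -> : u *m udiag_mx d *m u ^t* = (u *m V ^t*) *m diag_mx d *m (u *m V ^t*) ^t*.
  by rewrite trmxC_mul trmxCK udiag_mxE !mulmxA.
rewrite mul_mx_diag mxE; apply: eq_bigr => k _.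
by rewrite !mxE normCK; ring.
Qed.

Lemma dnorm_unitary u : '[u] = \sum_k `|(u *m V ^t*) 0 k| ^+ 2.
Proof.
rewrite -{1}[u]mulmx1 -udiag_mx1 quad_udiag_mx.
by apply: eq_bigr => k _; rewrite mxE mul1r.
Qed.

Lemma mxtrace_udiag_mx d : \tr (udiag_mx d) = \sum_k d 0 k.
Proof.
by rewrite udiag_mxE mxtrace_mulC mulmxA (unitarymxP V_unitary) mul1mx mxtrace_diag.
Qed.

Lemma mxtrace_mul_udiag_mx (Y : 'M[C]_n) d :
  \tr (Y *m udiag_mx d) = \sum_k d 0 k * '[row k V *m Y, row k V].
Proof.
rewrite udiag_mxE !mulmxA mxtrace_mulC !mulmxA /mxtrace; apply: eq_bigr => k _.
by rewrite mul_mx_diag mxE (mulmx_trmxC_entry V Y V) mulrC.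
Qed.

Lemma eigvals_udiag_mx d :
  perm_eq (eigvals (udiag_mx d)) [seq d 0 k | k <- enum 'I_n].
Proof.
apply: prod_XsubC_eq; rewrite -char_poly_eigvals udiag_mxE.
rewrite -(invmx_unitary V_unitary) char_poly_conj ?unitarymx_unit //.
rewrite char_poly_trig ?diag_mx_is_trig // big_map big_enum /=.
by apply: eq_bigr => k _; rewrite mxE eqxx mulr1n.
Qed.

Lemma dnorm_mul_udiag_mx_le d r u : (forall k, 0 <= d 0 k <= r) ->
  '[u *m udiag_mx d] <= r * '[u *m udiag_mx d, u].
Proof.
move=> d_bounds; have d_ge0 k : 0 <= d 0 k by case/andP: (d_bounds k).
rewrite dnorm_mulmx_herm; last by apply: trmxC_udiag_mx => k; rewrite ger0_real.
rewrite udiag_mxM !quad_udiag_mx mulr_sumr; apply: ler_sum => k _.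
rewrite mxE -mulrA ler_wpM2r ?mulr_ge0 ?exprn_ge0 //.
by case/andP: (d_bounds k).
Qed.

Lemma dnorm_mul_udiag_mx_le_interval d a b u :
  0 <= b -> (forall k, b <= d 0 k <= a) ->
  '[u *m udiag_mx d] <= (a + b) * '[u *m udiag_mx d, u] - a * b * '[u].
Proof.
move=> b_ge0 d_bounds; have d_ge0 k : 0 <= d 0 k.
  by case/andP: (d_bounds k) => /(le_trans b_ge0).
rewrite dnorm_mulmx_herm; last by apply: trmxC_udiag_mx => k; rewrite ger0_real.
rewrite udiag_mxM !quad_udiag_mx dnorm_unitary !mulr_sumr -sumrB.
apply: ler_sum => k _; have [bd da] := andP (d_bounds k).
rewrite mxE -subr_ge0.
set w := `|_| ^+ 2; rewrite (_ : _ - _ = (a - d 0 k) * (d 0 k - b) * w); last by ring.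
by rewrite !mulr_ge0 ?subr_ge0 ?exprn_ge0.
Qed.

End UnitaryDiagonal.

Lemma hermitian_udiag_mx (C : numClosedFieldType) n (M : 'M[C]_n) :
  hermitian_mx M -> M = udiag_mx (spectralmx M) (spectral_diag M).
Proof.
move=> M_herm; have /orthomx_spectralP {1}-> : M \is normalmx.
  by apply/normalmxP; rewrite M_herm.
by rewrite udiag_mxE invmx_unitary // spectral_unitarymx.
Qed.

Lemma psd_spectral_diag_ge0 (C : numClosedFieldType) n (M : 'M[C]_n) k :
  psd_mx M -> 0 <= spectral_diag M 0 k.
Proof.
move=> M_psd; rewrite -(quad_row_udiag_mx (spectral_unitarymx M)).
by rewrite -hermitian_udiag_mx; [apply: M_psd.2 | apply: M_psd.1].
Qed.

Lemma tracenorm_dual (C : numClosedFieldType) n (M : 'M[C]_n) :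
  exists2 X : 'M[C]_n, (forall p r : 'rV[C]_n, `|'[p *m X, r]| ^+ 2 <= '[p] * '[r]) &
    \tr (X *m M) = tracenorm M.
Proof.
have H_psd := psd_trmxC_mul M; set H := M ^t* *m M in H_psd *.
set V := spectralmx H; set d := spectral_diag H.
have V_unitary : V \is unitarymx := spectral_unitarymx H.
have HE : H = udiag_mx V d := hermitian_udiag_mx H_psd.1.
have d_ge0 k : 0 <= d 0 k := psd_spectral_diag_ge0 k H_psd.
(* [udiag_mx V g] is the Moore-Penrose inverse of [sqrt H], so that [X] below is the
   partial isometry in the polar decomposition of [M^*]. *)
pose g := \row_k (if d 0 k == 0 then 0 else (sqrtC (d 0 k))^-1).
have gd k : g 0 k * d 0 k = sqrtC (d 0 k).
  rewrite mxE; have [-> | dk_neq0] := eqVneq (d 0 k) 0; first by rewrite mul0r sqrtC0.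
  by rewrite -{2}[d 0 k]sqrtCK expr2 mulrA mulVf ?mul1r ?sqrtC_eq0.
have gdg_le1 k : g 0 k * d 0 k * g 0 k <= 1.
  rewrite gd mxE; have [_ | dk_neq0] := eqVneq (d 0 k) 0; first by rewrite mulr0 ler01.
  by rewrite mulfV ?sqrtC_eq0.
have G_herm : hermitian_mx (udiag_mx V g).
  by apply: trmxC_udiag_mx => k; rewrite mxE; case: eqP => // _; rewrite rpredV sqrtC_real.
exists (udiag_mx V g *m M ^t*) => [p r | ].
  apply: le_trans (CauchySchwarz_mx _ r) _; apply: ler_wpM2r; first exact: dnormmx_ge0.
  have -> : '[p *m (udiag_mx V g *m M ^t*)] =
            '[p *m (udiag_mx V g *m H *m udiag_mx V g), p].
    by rewrite trmxC_mul trmxC_mul trmxCK G_herm !mulmxA.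
  rewrite HE !udiag_mxM // quad_udiag_mx (dnorm_unitary V_unitary).
  apply: ler_sum => k _; rewrite ler_piMl ?exprn_ge0 //.
  by move: (gdg_le1 k); rewrite !mxE.
rewrite -mulmxA -/H HE udiag_mxM // mxtrace_udiag_mx //.
rewrite /tracenorm /singvals big_map -/H HE.
rewrite (perm_big _ (eigvals_udiag_mx V_unitary d)) big_map big_enum /=.
by apply: eq_bigr => k _; rewrite mxE gd.
Qed.

Lemma tracenorm_ge0 (C : numClosedFieldType) n (M : 'M[C]_n) : 0 <= tracenorm M.
Proof.
rewrite /tracenorm /singvals big_map big_seq sumr_ge0 // => s.
by rewrite mem_eigvals sqrtC_ge0 => /(psd_eigenvalue_ge0 (psd_trmxC_mul M)).
Qed.

Section KantorovichBounds.
Variables (C : numClosedFieldType) (n : nat) (A Z : 'M[C]_n) (a b : C).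
Hypotheses (A_psd : psd_mx A) (Z_pd : pd_mx Z).
Hypotheses (a_eig : eigenvalue Z a) (b_eig : eigenvalue Z b).
Hypotheses (le_a : forall l, eigenvalue Z l -> l <= a).
Hypotheses (ge_b : forall l, eigenvalue Z l -> b <= l).

Let b_gt0 : 0 < b := pd_eigenvalue_gt0 Z_pd b_eig.
Let a_gt0 : 0 < a := lt_le_trans b_gt0 (ge_b a_eig).
Let ab_gt0 : 0 < a * b := mulr_gt0 a_gt0 b_gt0.

Let V := spectralmx Z.
Let z := spectral_diag Z.
Let V_unitary : V \is unitarymx := spectral_unitarymx Z.
Let ZE : Z = udiag_mx V z := hermitian_udiag_mx Z_pd.1.

Let z_bounds k : b <= z 0 k <= a.
Proof.
by have := eigenvalue_udiag_mx V_unitary z k; rewrite -ZE => z_eig; rewrite ge_b ?le_a.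
Qed.

Let sqrtz_neq0 k : sqrtC (z 0 k) != 0.
Proof. by rewrite sqrtC_eq0 gt_eqF // (lt_le_trans b_gt0) //; case/andP: (z_bounds k). Qed.

Let sqrtz_real k : sqrtC (z 0 k) \is Num.real.
Proof. by rewrite sqrtC_real // (le_trans (ltW b_gt0)) //; case/andP: (z_bounds k). Qed.

Let S := udiag_mx V (\row_k sqrtC (z 0 k)).
Let T := udiag_mx V (\row_k (sqrtC (z 0 k))^-1).

Let S_herm : hermitian_mx S.
Proof. by apply: trmxC_udiag_mx => k; rewrite mxE. Qed.

Let T_herm : hermitian_mx T.
Proof. by apply: trmxC_udiag_mx => k; rewrite mxE rpredV. Qed.

Let S_sqr : S *m S = Z.
Proof.
by rewrite udiag_mxM // ZE; congr udiag_mx; apply/rowP => k; rewrite !mxE -expr2 sqrtCK.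
Qed.

Let S_T : S *m T = 1%:M.
Proof.
rewrite udiag_mxM // -(udiag_mx1 V_unitary); congr udiag_mx.
by apply/rowP => k; rewrite !mxE mulfV.
Qed.

Let T_S : T *m S = 1%:M.
Proof.
rewrite udiag_mxM // -(udiag_mx1 V_unitary); congr udiag_mx.
by apply/rowP => k; rewrite !mxE mulVf.
Qed.

Lemma kantorovich_dnorm (r : 'rV[C]_n) :
  4 * (a * b) * ('[r *m S] * '[r *m T]) <= ((a + b) * '[r]) ^+ 2.
Proof.
pose w k := `|(r *m V ^t*) 0 k| ^+ 2.
have dnormS : '[r *m S] = \sum_k z 0 k * w k.
  by rewrite dnorm_mulmx_herm // S_sqr {1}ZE quad_udiag_mx.
have dnormT : '[r *m T] = \sum_k w k / z 0 k.
  rewrite dnorm_mulmx_herm // udiag_mxM // quad_udiag_mx; apply: eq_bigr => k _.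
  by rewrite -/(w k) !mxE -invfM -expr2 sqrtCK mulrC.
rewrite dnormS dnormT (dnorm_unitary V_unitary).
by apply: kantorovich_sum => // k; rewrite exprn_ge0.
Qed.

Lemma dnorm_mulZ_le (y : 'rV[C]_n) :
  '[y *m Z] <= (a + b) * '[y *m Z, y] - a * b * '[y].
Proof. by rewrite ZE; apply: dnorm_mul_udiag_mx_le_interval => //; apply: ltW. Qed.

Let P := S *m A *m S.

Let P_psd : psd_mx P.
Proof.
split=> [|u].
  by rewrite /hermitian_mx /P (trmxC_mul (S *m A)) (trmxC_mul S) S_herm A_psd.1 mulmxA.
rewrite (_ : u *m P *m u ^t* = (u *m S) *m A *m (u *m S) ^t*) ?A_psd.2 //.
by rewrite trmxC_mul S_herm /P !mulmxA.
Qed.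

Let W := spectralmx P.
Let lam := spectral_diag P.
Let W_unitary : W \is unitarymx := spectral_unitarymx P.
Let PE : P = udiag_mx W lam := hermitian_udiag_mx P_psd.1.
Let lam_ge0 j : 0 <= lam 0 j := psd_spectral_diag_ge0 j P_psd.

Let AZ_similar : A *m Z = T *m P *m S.
Proof. by rewrite /P -S_sqr !mulmxA T_S mul1mx. Qed.

Let rho := specrad (A *m Z).

Let lam_le_rho j : lam 0 j <= rho.
Proof.
rewrite -(ger0_norm (lam_ge0 j)); apply: norm_le_specrad; apply/eigenvalueP.
exists (row j W *m S); last first.
  apply: contra_neq (row_unitary_neq0 W_unitary j) => /(congr1 (mulmx^~ T)).
  by rewrite -mulmxA S_T mulmx1 mul0mx.
by rewrite AZ_similar PE !mulmxA -(mulmxA _ S T) S_T mulmx1 row_udiag_mx // scalemxAl.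
Qed.

Lemma mxtrace_AZ : \tr (A *m Z) = \sum_j lam 0 j.
Proof. by rewrite AZ_similar mxtrace_mulC mulmxA S_T mul1mx PE mxtrace_udiag_mx. Qed.

Lemma quad_AZA_le (u : 'rV[C]_n) : '[u *m A *m Z, u *m A] <= rho * '[u *m A, u].
Proof.
have -> : '[u *m A *m Z, u *m A] = '[u *m T *m P].
  rewrite -S_sqr !trmxC_mul S_herm T_herm A_psd.1 /P !mulmxA -(mulmxA u T S) T_S mulmx1.
  by rewrite -(mulmxA _ S T) S_T mulmx1.
have -> : '[u *m A, u] = '[u *m T *m P, u *m T].
  rewrite trmxC_mul T_herm /P !mulmxA -(mulmxA u T S) T_S mulmx1.
  by rewrite -(mulmxA _ S T) S_T mulmx1.
by rewrite PE dnorm_mul_udiag_mx_le // => j; rewrite lam_ge0 lam_le_rho.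
Qed.

Let K_rho_ge0 : 0 <= kantorovich a b * rho.
Proof. by rewrite mulr_ge0 ?specrad_ge0 // kantorovich_ge0 // ltW. Qed.

Lemma eigenvalue_trC_AZ_le x : eigenvalue ((A *m Z) ^t* *m (A *m Z)) x ->
  4 * (a * b) * x <= ((a + b) * rho) ^+ 2.
Proof.
have AZ_trC : (A *m Z) ^t* = Z *m A by rewrite trmxC_mul Z_pd.1 A_psd.1.
have ZA_trC : (Z *m A) ^t* = A *m Z by rewrite trmxC_mul Z_pd.1 A_psd.1.
have p_real : (a + b) * rho \is Num.real.
  by rewrite ger0_real // mulr_ge0 ?specrad_ge0 // addr_ge0 // ltW.
case/eigenvalueP => v; rewrite AZ_trC => vM v_neq0.
set u := v *m (Z *m A).
have dnorm_u : '[u] = x * '[v].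
  by rewrite /u trmxC_mul ZA_trC mulmxA -(mulmxA v) vM -scalemxAl mxE.
have [u0 | u_neq0] := eqVneq u 0.
  move: dnorm_u; rewrite u0 mul0mx mxE => /esym/eqP.
  by rewrite mulf_eq0 (gt_eqF (dnormmx_gt0 v_neq0)) orbF => /eqP->; rewrite mulr0 -realEsqr.
have uM : u *m (A *m Z) *m (Z *m A) = x *: u.
  by rewrite /u -(mulmxA v) vM -scalemxAl.
have dnorm_uAZ : '[u *m A *m Z] = x * '[u].
  by rewrite -(mulmxA u A Z) trmxC_mul AZ_trC (mulmxA (u *m _)) uM -scalemxAl mxE.
have t_ge0 : 0 <= '[u *m A, u] := A_psd.2 u.
have u_gt0 := dnormmx_gt0 u_neq0.
apply: (le_quadratic_max (Y := '[u *m A]) p_real (ger0_real t_ge0) ab_gt0 u_gt0).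
  rewrite -dnorm_uAZ; apply: le_trans (dnorm_mulZ_le _) _.
  by rewrite lerD2r -mulrA ler_wpM2l ?quad_AZA_le // addr_ge0 // ltW.
by rewrite -(ger0_norm t_ge0) CauchySchwarz_mx.
Qed.

Lemma opnorm_AZ_le : opnorm (A *m Z) <= kantorovich a b * rho.
Proof.
rewrite /opnorm big_seq; apply: bigmax_le => [|_ /mapP[x x_eig ->]].
  exact: K_rho_ge0.
rewrite mem_eigvals in x_eig; have x_ge0 := psd_eigenvalue_ge0 (psd_trmxC_mul _) x_eig.
rewrite -(sqrCK K_rho_ge0) ler_sqrtC ?nnegrE ?exprn_ge0 //.
exact: le_kantorovich_sqr (eigenvalue_trC_AZ_le x_eig).
Qed.

Lemma tracenorm_AZ_le : tracenorm (A *m Z) <= kantorovich a b * \tr (A *m Z).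
Proof.
have [X X_contr trX] := tracenorm_dual (A *m Z).
pose c j := '[row j W *m S *m X, row j W *m T].
have c_le j : `|c j| <= kantorovich a b.
  have K_ge0 : 0 <= kantorovich a b by rewrite kantorovich_ge0 // ltW.
  rewrite -(ler_pXn2r (_ : (0 < 2)%N)) ?nnegrE //.
  apply: le_trans (X_contr _ _) _; rewrite -[kantorovich a b]mulr1.
  rewrite -(dnorm_row_unitary W_unitary j); apply: le_kantorovich_sqr => //.
  exact: kantorovich_dnorm.
have trXE : \tr (X *m (A *m Z)) = \sum_j lam 0 j * c j.
  rewrite AZ_similar PE !mulmxA mxtrace_mulC !mulmxA mxtrace_mul_udiag_mx.
  by apply: eq_bigr => j _; rewrite /c trmxC_mul T_herm !mulmxA.
rewrite -(ger0_norm (tracenorm_ge0 _)) -trX trXE mxtrace_AZ mulr_sumr.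
apply: le_trans (ler_norm_sum _ _ _) _; apply: ler_sum => j _.
by rewrite normrM ger0_norm // mulrC ler_wpM2r.
Qed.

End KantorovichBounds.

Theorem corollary1p4 (R : rcfType) (n : nat) (A Z : 'M[R[i]]_n) (a b : R[i]) :
  psd_mx A -> pd_mx Z ->
  eigenvalue Z a -> (forall l, eigenvalue Z l -> l <= a) ->
  eigenvalue Z b -> (forall l, eigenvalue Z l -> b <= l) ->
  opnorm (A *m Z) <= (a + b) / (2 * sqrtC (a * b)) * specrad (A *m Z) /\
  tracenorm (A *m Z) <= (a + b) / (2 * sqrtC (a * b)) * \tr (A *m Z).
Proof.
move=> A_psd Z_pd a_eig le_a b_eig ge_b.
split; [exact: opnorm_AZ_le A_psd Z_pd a_eig b_eig le_a ge_b |
        exact: tracenorm_AZ_le A_psd Z_pd a_eig b_eig le_a ge_b].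
Qed.
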